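(* Let $L_1$ and $L_2$ be non-nilpotent finite-dimensional Lie algebras over a field $F$. Then $\Gamma_{\mathfrak{N}}(L_1\oplus L_2)$ is connected.
   Context: $\langle a,b\rangle$ denotes the Lie subalgebra generated by $a,b$, and $\mathrm{nil}(L)=\{x\in L\mid \langle h,x\rangle \text{ is nilpotent for all } h\in L\}$. For a finite-dimensional non-nilpotent Lie algebra $L$, the nilpotent graph $\Gamma_{\mathfrak{N}}(L)$ is the simple undirected graph with vertex set $L\setminus\mathrm{nil}(L)$ in which distinct vertices $x,y$ are adjacent iff $\langle x,y\rangle$ is nilpotent. $L_1\oplus L_2$ is the direct sum of Lie algebras with componentwise bracket. *)

From HB Require Import structures.
From mathcomp Require Import all_boot all_order all_algebra.
From Stdlib Require Import Relations.
Set Implicit Arguments. Unset Strict Implicit. Unset Printing Implicit Defensive.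
Import GRing.Theory.
Local Open Scope ring_scope.

Section Lie.
Variables (F : fieldType) (V : vectType F).

Definition is_lie_bracket (b : V -> V -> V) : Prop :=
  [/\ (forall (a : F) x y z, b (a *: x + y) z = a *: b x z + b y z),
      (forall (a : F) x y z, b z (a *: x + y) = a *: b z x + b z y),
      (forall x, b x x = 0) &
      (forall x y z, b x (b y z) + b y (b z x) + b z (b x y) = 0)].

(* [U, W] : the subspace spanned by all brackets [u, w], u in U, w in W
   (spanned by brackets of basis vectors, by bilinearity). *)
Definition bracket_sp (b : V -> V -> V) (U W : {vspace V}) : {vspace V} :=
  <<[seq b x y | x <- (vbasis U : seq V), y <- (vbasis W : seq V)]>>%VS.

(* lower central series of a subalgebra S : S^1 = S, S^(k+1) = [S, S^k] *)
Fixpoint lcs (b : V -> V -> V) (S : {vspace V}) (n : nat) : {vspace V} :=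
  match n with
  | 0 => S
  | n'.+1 => bracket_sp b S (lcs b S n')
  end.

Definition lie_nilpotent (b : V -> V -> V) (S : {vspace V}) : Prop :=
  exists n, lcs b S n = 0%VS.

Definition lie_closed (b : V -> V -> V) (U : {vspace V}) : Prop :=
  forall x y, x \in U -> y \in U -> b x y \in U.

Definition is_gen_subalg (b : V -> V -> V) (x y : V) (S : {vspace V}) : Prop :=
  [/\ x \in S, y \in S, lie_closed b S &
      forall U : {vspace V}, lie_closed b U -> x \in U -> y \in U -> (S <= U)%VS].

Definition gen_nilpotent (b : V -> V -> V) (x y : V) : Prop :=
  exists S, is_gen_subalg b x y S /\ lie_nilpotent b S.

Definition in_nil (b : V -> V -> V) (x : V) : Prop :=
  forall h, gen_nilpotent b h x.

Definition nil_adj (b : V -> V -> V) (x y : V) : Prop :=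
  [/\ ~ in_nil b x, ~ in_nil b y, x <> y & gen_nilpotent b x y].

Definition nilgraph_connected (b : V -> V -> V) : Prop :=
  forall x y, ~ in_nil b x -> ~ in_nil b y -> clos_refl_trans V (nil_adj b) x y.

End Lie.

Definition sum_bracket (F : fieldType) (V1 V2 : vectType F)
  (b1 : V1 -> V1 -> V1) (b2 : V2 -> V2 -> V2) (p q : V1 * V2) : V1 * V2 :=
  (b1 p.1 q.1, b2 p.2 q.2).

From Pilot Require Import Defs.
From HB Require Import structures.
From mathcomp Require Import all_boot all_order all_algebra.
From Stdlib Require Import Classical Relations Wf_nat.
From mathcomp Require Import zify.
Set Implicit Arguments. Unset Strict Implicit. Unset Printing Implicit Defensive.
Import GRing.Theory.
Local Open Scope ring_scope.

(* Engel's theorem -- a Lie subalgebra on which every ad z acts nilpotently is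
   nilpotent -- provides in each non-nilpotent L_i a pair z_i, c_i with ad z_i not
   nilpotent on c_i; hence (c1,0) and (0,c2) are vertices of the graph.
   For any (x1,x2) the vectors (x1,0), (0,x2) and (x1,x2) span an abelian
   subalgebra, so any two of them that are vertices are adjacent. If (x1,0) and
   (0,x2) both lie in nil(L1 + L2), so does (x1,x2): the subalgebra generated by
   h and (x1,x2) lies in the product of the projections of <h,(x1,0)> and
   <h,(0,x2)>, on which every ad z is nilpotent, and Engel applies. So every
   vertex (x1,x2) reaches (0,c2), either through (x1,0) or through (0,x2) and
   (c1,0). *)

Lemma ex_argmin_nat (T : Type) (m : T -> nat) (P : T -> Prop) x :
  P x -> exists2 y, P y & forall z, P z -> (m y <= m z)%N.
Proof.
move=> Px; have [n [[[y [Py <-]] ymin] _]] :=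
  dec_inh_nat_subset_has_unique_least_element (fun n => exists y, P y /\ m y = n)
    (fun n => classic _) (ex_intro _ (m x) (ex_intro _ x (conj Px erefl))).
by exists y => // z Pz; apply/leP; apply: ymin; exists z.
Qed.

Lemma clos_rt_sym (T : Type) (R : relation T) :
  (forall x y, R x y -> R y x) ->
  forall x y, clos_refl_trans T R x y -> clos_refl_trans T R y x.
Proof.
move=> symR x y; elim=> [u v Ruv | u | u v w _ IHuv _ IHvw].
- exact/rt_step/symR.
- exact: rt_refl.
- exact: rt_trans IHvw IHuv.
Qed.

Lemma iter_cross (T : Type) (f : T -> T) (P : pred T) u k :
  ~~ P u -> P (iter k f u) -> exists j, ~~ P (iter j f u) /\ P (f (iter j f u)).
Proof.
move=> Pu; elim: k => [|k IH] /=; first by rewrite (negbTE Pu).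
by case: (boolP (P (iter k f u))) => [/IH | notPk Pk] //; exists k.
Qed.

Section Lie.
Variables (F : fieldType) (V : vectType F) (b : V -> V -> V).
Hypothesis lieb : is_lie_bracket b.

Lemma bracketDl x y z : b (x + y) z = b x z + b y z.
Proof. by case: lieb => linl _ _ _; have := linl 1 x y z; rewrite !scale1r. Qed.

Lemma bracketDr x y z : b z (x + y) = b z x + b z y.
Proof. by case: lieb => _ linr _ _; have := linr 1 x y z; rewrite !scale1r. Qed.

Lemma bracket0l z : b 0 z = 0.
Proof. by apply: (@addrI _ (b 0 z)); rewrite -bracketDl !addr0. Qed.

Lemma bracket0r z : b z 0 = 0.
Proof. by apply: (@addrI _ (b z 0)); rewrite -bracketDr !addr0. Qed.

Lemma bracketZl a x z : b (a *: x) z = a *: b x z.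
Proof. by case: lieb => linl _ _ _; rewrite -[a *: x]addr0 linl bracket0l addr0. Qed.

Lemma bracketZr a x z : b z (a *: x) = a *: b z x.
Proof. by case: lieb => _ linr _ _; rewrite -[a *: x]addr0 linr bracket0r addr0. Qed.

Lemma bracketxx x : b x x = 0.
Proof. by case: lieb. Qed.

Lemma bracket_antisym x y : b x y = - b y x.
Proof.
apply/eqP; rewrite -addr_eq0; have := bracketxx (x + y).
by rewrite bracketDl !bracketDr !bracketxx add0r addr0 => ->.
Qed.

Lemma bracket_suml I r (P : pred I) (f : I -> V) z :
  b (\sum_(i <- r | P i) f i) z = \sum_(i <- r | P i) b (f i) z.
Proof. exact: (big_morph (b^~ z) (fun x y => bracketDl x y z) (bracket0l z)). Qed.

Lemma bracket_sumr I r (P : pred I) (f : I -> V) z :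
  b z (\sum_(i <- r | P i) f i) = \sum_(i <- r | P i) b z (f i).
Proof. exact: (big_morph (b z) (fun x y => bracketDr x y z) (bracket0r z)). Qed.

Lemma mem_bracket_sp (U W : {vspace V}) x y :
  x \in U -> y \in W -> b x y \in bracket_sp b U W.
Proof.
move=> /coord_vbasis -> /coord_vbasis ->; rewrite bracket_suml.
apply: memv_suml => i _; rewrite bracketZl bracket_sumr; apply: memvZ.
apply: memv_suml => j _; rewrite bracketZr; apply/memvZ/memv_span.
by apply: allpairs_f; apply: mem_nth; rewrite size_tuple.
Qed.

Lemma bracket_sp_sub (U W P : {vspace V}) :
  (forall x y, x \in U -> y \in W -> b x y \in P) -> (bracket_sp b U W <= P)%VS.
Proof.
move=> sUWP; apply/span_subvP => _ /allpairsP [[x y] [/= xU yW ->]].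
by apply: sUWP; apply: vbasis_mem.
Qed.

Definition ad_nil (z u : V) := exists n, iter n (b z) u = 0.

Lemma nilpotent_ad_nil (S : {vspace V}) z u :
  lie_nilpotent b S -> z \in S -> u \in S -> ad_nil z u.
Proof.
move=> [n lcs0] zS uS; exists n.
have lcs_iter k : iter k (b z) u \in lcs b S k.
  by elim: k => [|k IHk] //=; apply: mem_bracket_sp.
by have := lcs_iter n; rewrite lcs0 memv0 => /eqP.
Qed.

Lemma gen_nilpotent_ad_nil x y : gen_nilpotent b x y -> ad_nil x y.
Proof. by move=> [S [[xS yS _ _] nilS]]; apply: nilpotent_ad_nil nilS xS yS. Qed.

Lemma gen_nilpotentC x y : gen_nilpotent b x y -> gen_nilpotent b y x.
Proof.
move=> [S [[xS yS clS minS] nilS]]; exists S; split => //; split => // U clU yU xU.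
exact: minS.
Qed.

Lemma lie_closed0 : lie_closed b 0%VS.
Proof. by move=> x y; rewrite !memv0 => /eqP -> /eqP ->; rewrite bracket0l. Qed.

Lemma lie_closedI (U W : {vspace V}) :
  lie_closed b U -> lie_closed b W -> lie_closed b (U :&: W)%VS.
Proof.
move=> clU clW x y /memv_capP [xU xW] /memv_capP [yU yW].
by apply/memv_capP; split; [apply: clU | apply: clW].
Qed.

Lemma gen_subalg_exists x y : exists S, is_gen_subalg b x y S.
Proof.
pose P (U : {vspace V}) := [/\ lie_closed b U, x \in U & y \in U].
have PV : P fullv by split; [move=> *|..]; apply: memvf.
have [S [clS xS yS] Smin] := ex_argmin_nat (fun U => \dim U) PV.
exists S; split => // U clU xU yU.
have /Smin dimSU : P (S :&: U)%VS.
  by split; [apply: lie_closedI | apply/memv_capP..].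
have /eqP <- : (S :&: U == S)%VS by rewrite eqEdim capvSl.
exact: capvSr.
Qed.

Lemma ex_max_proper_subalg (M : {vspace V}) : lie_closed b M -> M != 0%VS ->
  exists N : {vspace V}, [/\ lie_closed b N, (N <= M)%VS, ~~ (M <= N)%VS &
    forall N' : {vspace V}, lie_closed b N' -> (N' <= M)%VS -> ~~ (M <= N')%VS ->
      (\dim N' <= \dim N)%N].
Proof.
move=> clM nzM.
pose P (N : {vspace V}) := [/\ lie_closed b N, (N <= M)%VS & ~~ (M <= N)%VS].
have P0 : P 0%VS by split; [apply: lie_closed0 | apply: sub0v | rewrite subv0].
have [N [clN sNM nsMN] Nmax] := ex_argmin_nat (fun N => \dim M - \dim N)%N P0.
exists N; split => // N' clN' sN'M nsMN'.
have := Nmax N' (And3 clN' sN'M nsMN'); have := dimvS sN'M; lia.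
Qed.

Definition ad_stable (M X : {vspace V}) := forall m x, m \in M -> x \in X -> b m x \in X.

Lemma ad_stableS (N M X : {vspace V}) : (N <= M)%VS -> ad_stable M X -> ad_stable N X.
Proof. by move=> sNM stX m x /(subvP sNM); apply: stX. Qed.

Lemma lie_closedD_line (N : {vspace V}) z : lie_closed b N ->
  (forall n, n \in N -> b n z \in N) -> lie_closed b (N + <[z]>)%VS.
Proof.
move=> clN normz _ _ /memv_addP [n1 n1N [_ /vlineP [a ->] ->]]
  /memv_addP [n2 n2N [_ /vlineP [c ->] ->]].
apply: (subvP (addvSl _ _)).
rewrite bracketDl !bracketDr !bracketZl !bracketZr bracketxx !scaler0 addr0.
rewrite (bracket_antisym z) scalerN; apply: memvD; first apply: memvD.
- exact: clN.
- exact/memvZ/normz.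
- by rewrite memvN; apply/memvZ/normz.
Qed.

Lemma subv_max_subalg_line (M N : {vspace V}) z :
  lie_closed b N -> (N <= M)%VS ->
  (forall N', lie_closed b N' -> (N' <= M)%VS -> ~~ (M <= N')%VS ->
    (\dim N' <= \dim N)%N) ->
  z \in M -> z \notin N -> (forall n, n \in N -> b n z \in N) ->
  (M <= N + <[z]>)%VS.
Proof.
move=> clN sNM Nmax zM zN normz; apply/negPn/negP => nsMNz.
have sNzM : (N + <[z]> <= M)%VS by rewrite subv_add sNM -memvE.
have := Nmax _ (lie_closedD_line clN normz) sNzM nsMNz.
rewrite leqNgt (ltn_leqif (dimv_leqif_sup (addvSl N <[z]>))); apply/negP/negPn.
by apply/subvPn; exists z => //; apply: (subvP (addvSr _ _)); apply: memv_line.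
Qed.

Lemma ad_stable_rel_annihilator (N W : {vspace V}) z u :
  (forall n, n \in N -> b n z \in N) -> (forall w, w \in W -> b z w \in W) ->
  (forall n, n \in N -> b n u \in W) -> forall n, n \in N -> b n (b z u) \in W.
Proof.
move=> normz stW annu n nN; case: lieb => _ _ _ /(_ n z u) /eqP.
rewrite -addrA addr_eq0 => /eqP ->; rewrite memvN.
rewrite (bracket_antisym u n) (bracket_antisym u (b n z)) memvD // ?memvN.
  by apply: stW; rewrite memvN; apply: annu.
by apply: annu; apply: normz.
Qed.

Lemma common_vector0 (W U : {vspace V}) : ~~ (U <= W)%VS ->
  exists v, [/\ v \in U, v \notin W & forall m, m \in 0%VS -> b m v \in W].
Proof.
move=> /subvPn [v vU vW]; exists v; split => // m.
by rewrite memv0 => /eqP ->; rewrite bracket0l mem0v.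
Qed.

Section Engel.
Variable K : {vspace V}.
Hypothesis clK : lie_closed b K.
Hypothesis adK : forall z u, z \in K -> u \in K -> ad_nil z u.

Lemma engel_common_vector n (M W U : {vspace V}) : (\dim M <= n)%N ->
  lie_closed b M -> (M <= K)%VS -> (U <= K)%VS -> ~~ (U <= W)%VS ->
  ad_stable M W -> ad_stable M U ->
  exists v, [/\ v \in U, v \notin W & forall m, m \in M -> b m v \in W].
Proof.
elim: n M W U => [|n IH] M W U dimM clM sMK sUK nsUW stW stU;
  have [->|nzM] := eqVneq M 0%VS; try exact: common_vector0.
  by move: dimM; rewrite leqn0 dimv_eq0 (negbTE nzM).
have [N [clN sNM nsMN Nmax]] := ex_max_proper_subalg clM nzM.
have ltNM : (\dim N < \dim M)%N by rewrite (ltn_leqif (dimv_leqif_sup sNM)).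
have dimN : (\dim N <= n)%N by rewrite -ltnS (leq_trans ltNM).
have sNK := subv_trans sNM sMK.
(* Induction for N acting on M / N gives z in M \ N normalising N; by
   maximality of N, M = N + <[z]>. *)
have [z [zM zN normz]] :=
  IH N N M dimN clN sNK sMK nsMN clN (ad_stableS sNM clM).
have sMNz := subv_max_subalg_line clN sNM Nmax zM zN normz.
have [u0 [u0U u0W annu0]] :=
  IH N W U dimN clN sNK sUK nsUW (ad_stableS sNM stW) (ad_stableS sNM stU).
(* The vectors u with [N, u] <= W form an ad z-stable set containing u0; as ad z
   is nilpotent, the last iterate of u0 outside W is annihilated by M modulo W. *)
have iter_ann j : iter j (b z) u0 \in U /\
    forall n, n \in N -> b n (iter j (b z) u0) \in W.
  elim: j => [|j [jU jann]] //=; split; first exact: stU.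
  exact: ad_stable_rel_annihilator normz (fun w => stW z w zM) jann.
have [k iterk] := adK (subvP sMK z zM) (subvP sUK u0 u0U).
have [|j [jW jW']] := @iter_cross _ (b z) (fun v => v \in W) u0 k u0W.
  by rewrite iterk mem0v.
have [jU jann] := iter_ann j.
exists (iter j (b z) u0); split => // m /(subvP sMNz).
move=> /memv_addP [x xN [_ /vlineP [a ->] ->]].
by rewrite bracketDl bracketZl; apply: memvD; [apply: jann | apply: memvZ].
Qed.

Lemma engel_flag d (W : {vspace V}) : (W <= K)%VS -> ad_stable K W ->
  (\dim K - \dim W <= d)%N -> exists n, (lcs b K n <= W)%VS.
Proof.
elim: d W => [|d IH] W sWK stW codimW; have [sKW|nsKW] := boolP (K <= W)%VS;
  try by exists 0%N.
  have : (\dim W < \dim K)%N by rewrite (ltn_leqif (dimv_leqif_sup sWK)).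
  by move: codimW; lia.
have [v [vK vW annv]] :=
  engel_common_vector (leqnn _) clK (subvv K) (subvv K) nsKW stW clK.
pose W' := (W + <[v]>)%VS.
have bracketW' m x : m \in K -> x \in W' -> b m x \in W.
  move=> mK /memv_addP [w wW [_ /vlineP [a ->] ->]].
  by rewrite bracketDr bracketZr; apply: memvD; [apply: stW | apply/memvZ/annv].
have sWW' : (W <= W')%VS := addvSl W <[v]>.
have sW'K : (W' <= K)%VS by rewrite subv_add sWK -memvE.
have ltWW' : (\dim W < \dim W')%N.
  rewrite (ltn_leqif (dimv_leqif_sup sWW')); apply/subvPn; exists v => //.
  exact: (subvP (addvSr _ _)) _ (memv_line v).
have [|n lcsW'] := IH W' sW'K (fun m x mK xW' => subvP sWW' _ (bracketW' m x mK xW')).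
  by have := dimvS sW'K; move: codimW ltWW'; lia.
by exists n.+1; apply: bracket_sp_sub => m x mK /(subvP lcsW'); apply: bracketW'.
Qed.

Theorem engel : lie_nilpotent b K.
Proof.
have st0 : ad_stable K 0%VS.
  by move=> m x _; rewrite memv0 => /eqP ->; rewrite bracket0r mem0v.
have [n lcs0] := engel_flag (sub0v K) st0 (leqnn _).
by exists n; apply/eqP; rewrite -subv0.
Qed.

End Engel.

Lemma not_nilpotent_ad_witness : ~ lie_nilpotent b fullv -> exists z u, ~ ad_nil z u.
Proof.
move=> nnil; apply: NNPP => noWitness; apply/nnil/engel => [x y _ _|z u _ _].
  exact: memvf.
by apply: NNPP => nzu; apply: noWitness; exists z, u.
Qed.

Lemma gen_nilpotent_abelian x y (S : {vspace V}) :
  x \in S -> y \in S -> (S <= <[x]> + <[y]>)%VS ->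
  (forall u v, u \in S -> v \in S -> b u v = 0) -> gen_nilpotent b x y.
Proof.
move=> xS yS sSxy abS; have bracketS0 u v : u \in S -> v \in S -> b u v \in 0%VS.
  by move=> uS vS; rewrite abS // mem0v.
exists S; split; last by exists 1%N; apply/eqP; rewrite -subv0; apply: bracket_sp_sub.
split => // [u v uS vS|U _ xU yU]; first by rewrite abS // mem0v.
by apply: subv_trans sSxy _; rewrite subv_add -!memvE xU yU.
Qed.

Lemma nil_adjC x y : nil_adj b x y -> nil_adj b y x.
Proof. by case=> nx ny nxy /gen_nilpotentC; split=> // /esym. Qed.

Lemma gen_nilpotent_path x y : ~ Defs.in_nil b x -> ~ Defs.in_nil b y ->
  gen_nilpotent b x y -> clos_refl_trans V (nil_adj b) x y.
Proof.
move=> nx ny nilxy; have [<-|nxy] := eqVneq x y; first exact: rt_refl.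
by apply: rt_step; split=> // /eqP; rewrite (negbTE nxy).
Qed.
End Lie.

Section DirectSum.
Variables (F : fieldType) (V1 V2 : vectType F).
Variables (b1 : V1 -> V1 -> V1) (b2 : V2 -> V2 -> V2).
Hypotheses (lieb1 : is_lie_bracket b1) (lieb2 : is_lie_bracket b2).
Local Notation b := (sum_bracket b1 b2).
Local Notation path := (clos_refl_trans _ (nil_adj b)).

Lemma sum_bracket_lie : is_lie_bracket b.
Proof.
case: lieb1 => linl1 linr1 alt1 jac1; case: lieb2 => linl2 linr2 alt2 jac2.
split=> [a x y z | a x y z | x | x y z]; rewrite /sum_bracket /=.
- by rewrite linl1 linl2.
- by rewrite linr1 linr2.
- by rewrite alt1 alt2.
- by rewrite -[LHS]/(_ + _ + _, _ + _ + _) jac1 jac2.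
Qed.

Lemma iter_sum_bracket n z u :
  iter n (b z) u = (iter n (b1 z.1) u.1, iter n (b2 z.2) u.2).
Proof. by elim: n => [|n /= ->] //; case: u. Qed.

Lemma ad_nil_fst z u : ad_nil b z u -> ad_nil b1 z.1 u.1.
Proof. by case=> n; rewrite iter_sum_bracket => -[]; exists n. Qed.

Lemma ad_nil_snd z u : ad_nil b z u -> ad_nil b2 z.2 u.2.
Proof. by case=> n; rewrite iter_sum_bracket => -[]; exists n. Qed.

Lemma ad_nil_pair z u : ad_nil b1 z.1 u.1 -> ad_nil b2 z.2 u.2 -> ad_nil b z u.
Proof.
have iter_stop (T : zmodType) (f : T -> T) m n v :
    f 0 = 0 -> iter n f v = 0 -> iter (m + n) f v = 0.
  by move=> f0 fv; rewrite iterD fv; elim: m => //= m ->.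
move=> [n1 e1] [n2 e2]; exists (n1 + n2)%N; rewrite iter_sum_bracket.
rewrite addnC (iter_stop _ _ n2 _ _ (bracket0r lieb1 _) e1).
by rewrite addnC (iter_stop _ _ n1 _ _ (bracket0r lieb2 _) e2).
Qed.

Definition lproj (w : V1 * V2) : V1 * V2 := (w.1, 0).
Definition rproj (w : V1 * V2) : V1 * V2 := (0, w.2).

Fact lproj_linear : linear lproj.
Proof. by move=> a x y; rewrite /lproj -[RHS]/(a *: x.1 + y.1, a *: 0 + 0) scaler0 addr0. Qed.
Fact rproj_linear : linear rproj.
Proof. by move=> a x y; rewrite /rproj -[RHS]/(a *: 0 + 0, a *: x.2 + y.2) scaler0 addr0. Qed.
HB.instance Definition _ := GRing.isLinear.Build F _ _ _ lproj lproj_linear.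
HB.instance Definition _ := GRing.isLinear.Build F _ _ _ rproj rproj_linear.

Definition pair_sp (S1 S2 : {vspace V1 * V2}) : {vspace V1 * V2} :=
  (linfun lproj @: S1 + linfun rproj @: S2)%VS.

Lemma pair_spP (S1 S2 : {vspace V1 * V2}) w :
  reflect (exists2 a, a \in S1 & exists2 c, c \in S2 & w = (a.1, c.2))
    (w \in pair_sp S1 S2).
Proof.
have lrprojE a c : lproj a + rproj c = (a.1, c.2).
  by rewrite /lproj /rproj -[LHS]/(a.1 + 0, 0 + c.2) addr0 add0r.
apply: (iffP memv_addP) => [[_ /memv_imgP [a aS1 ->] [_ /memv_imgP [c cS2 ->] ->]]|].
  by exists a => //; exists c; rewrite // !lfunE lrprojE.
move=> [a aS1 [c cS2 ->]]; rewrite -lrprojE.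
by exists (lproj a); [|exists (rproj c)]; rewrite // -lfunE memv_img.
Qed.

Lemma lie_closed_pair_sp (S1 S2 : {vspace V1 * V2}) :
  lie_closed b S1 -> lie_closed b S2 -> lie_closed b (pair_sp S1 S2).
Proof.
move=> clS1 clS2 _ _ /pair_spP [a aS1 [c cS2 ->]] /pair_spP [a' aS1' [c' cS2' ->]].
by apply/pair_spP; exists (b a a'); [apply: clS1 | exists (b c c'); [apply: clS2|]].
Qed.

Lemma ad_nil_pair_sp (S1 S2 : {vspace V1 * V2}) z u :
  lie_nilpotent b S1 -> lie_nilpotent b S2 ->
  z \in pair_sp S1 S2 -> u \in pair_sp S1 S2 -> ad_nil b z u.
Proof.
move=> nilS1 nilS2 /pair_spP [a aS1 [c cS2 ->]] /pair_spP [a' aS1' [c' cS2' ->]].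
apply: ad_nil_pair.
  exact: ad_nil_fst (nilpotent_ad_nil sum_bracket_lie nilS1 aS1 aS1').
exact: ad_nil_snd (nilpotent_ad_nil sum_bracket_lie nilS2 cS2 cS2').
Qed.

Lemma in_nil_pair (x1 : V1) (x2 : V2) :
  Defs.in_nil b (x1, 0) -> Defs.in_nil b (0, x2) -> Defs.in_nil b (x1, x2).
Proof.
move=> nil1 nil2 h.
have [S1 [[hS1 xS1 clS1 _] nilS1]] := nil1 h.
have [S2 [[hS2 xS2 clS2 _] nilS2]] := nil2 h.
have [S [hS xS clS minS]] := gen_subalg_exists b h (x1, x2).
have sST : (S <= pair_sp S1 S2)%VS.
  apply: minS; first exact: lie_closed_pair_sp.
    by apply/pair_spP; exists h => //; exists h => //; apply: surjective_pairing.
  by apply/pair_spP; exists (x1, 0) => //; exists (0, x2).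
exists S; split=> //; apply: (engel sum_bracket_lie clS) => z u zS uS.
exact: ad_nil_pair_sp nilS1 nilS2 (subvP sST z zS) (subvP sST u uS).
Qed.

Lemma not_in_nil_inl z (c : V1) : ~ ad_nil b1 z c -> ~ Defs.in_nil b (c, 0).
Proof.
by move=> nzc /(_ (z, 0)) /(gen_nilpotent_ad_nil sum_bracket_lie) /ad_nil_fst.
Qed.

Lemma not_in_nil_inr z (c : V2) : ~ ad_nil b2 z c -> ~ Defs.in_nil b (0, c).
Proof.
by move=> nzc /(_ (0, z)) /(gen_nilpotent_ad_nil sum_bracket_lie) /ad_nil_snd.
Qed.

Definition axes (x1 : V1) (x2 : V2) : {vspace V1 * V2} :=
  (<[(x1, 0%R)]> + <[(0%R, x2)]>)%VS.

Lemma gen_nilpotent_axes (x1 : V1) (x2 : V2) p q :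
  p \in axes x1 x2 -> q \in axes x1 x2 -> (axes x1 x2 <= <[p]> + <[q]>)%VS ->
  gen_nilpotent b p q.
Proof.
move=> pS qS sSpq; apply: (gen_nilpotent_abelian pS qS sSpq).
have inl_inr : b (x1, 0) (0, x2) = 0.
  by rewrite /sum_bracket /= bracket0r // bracket0l.
have inr_inl : b (0, x2) (x1, 0) = 0.
  by rewrite /sum_bracket /= bracket0l // bracket0r.
move=> u v /memv_addP [_ /vlineP [a ->] [_ /vlineP [c ->] ->]].
move=> /memv_addP [_ /vlineP [a' ->] [_ /vlineP [c' ->] ->]].
rewrite !(bracketDl sum_bracket_lie, bracketDr sum_bracket_lie).
rewrite !(bracketZl sum_bracket_lie, bracketZr sum_bracket_lie).
by rewrite !(bracketxx sum_bracket_lie) inl_inr inr_inl !scaler0 !addr0.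
Qed.

Lemma inl_add_inr (x1 : V1) (x2 : V2) : (x1, 0) + (0, x2) = (x1, x2).
Proof. by rewrite -[LHS]/(x1 + 0, 0 + x2) addr0 add0r. Qed.

Lemma line_addl (u v : V1 * V2) : u \in (<[u]> + <[v]>)%VS.
Proof. exact: subvP (addvSl _ _) _ (memv_line u). Qed.

Lemma line_addr (u v : V1 * V2) : v \in (<[u]> + <[v]>)%VS.
Proof. exact: subvP (addvSr _ _) _ (memv_line v). Qed.

Lemma gen_nilpotent_inl_inr (x1 : V1) (x2 : V2) : gen_nilpotent b (x1, 0) (0, x2).
Proof. exact: gen_nilpotent_axes (line_addl _ _) (line_addr _ _) (subvv _). Qed.

Lemma pair_in_axes (x1 : V1) (x2 : V2) : (x1, x2) \in axes x1 x2.
Proof. by rewrite -inl_add_inr memvD ?line_addl ?line_addr. Qed.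

Lemma gen_nilpotent_pair_inl (x1 : V1) (x2 : V2) : gen_nilpotent b (x1, x2) (x1, 0).
Proof.
apply: gen_nilpotent_axes (pair_in_axes x1 x2) (line_addl _ _) _.
rewrite /axes subv_add -!memvE line_addr /=.
have -> : (0, x2) = (x1, x2) - (x1, 0) by rewrite -(inl_add_inr x1 x2) addrC addKr.
by rewrite memvB ?line_addl ?line_addr.
Qed.

Lemma gen_nilpotent_pair_inr (x1 : V1) (x2 : V2) : gen_nilpotent b (x1, x2) (0, x2).
Proof.
apply: gen_nilpotent_axes (pair_in_axes x1 x2) (line_addr _ _) _.
rewrite /axes subv_add -!memvE line_addr andbT /=.
have -> : (x1, 0) = (x1, x2) - (0, x2) by rewrite -(inl_add_inr x1 x2) addrK.
by rewrite memvB ?line_addl ?line_addr.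
Qed.

Lemma path_to_inr (c1 : V1) (c2 : V2) x :
  ~ Defs.in_nil b (c1, 0) -> ~ Defs.in_nil b (0, c2) -> ~ Defs.in_nil b x ->
  path x (0, c2).
Proof.
case: x => x1 x2 nc1 nc2 nx.
have [nil1|nx1] := classic (Defs.in_nil b (x1, 0)).
  have nx2 : ~ Defs.in_nil b (0, x2) by move/(in_nil_pair nil1).
  apply: rt_trans (gen_nilpotent_path nx nx2 (gen_nilpotent_pair_inr x1 x2)) _.
  apply: rt_trans (gen_nilpotent_path nx2 nc1
    (gen_nilpotentC (gen_nilpotent_inl_inr c1 x2))) _.
  exact: gen_nilpotent_path nc1 nc2 (gen_nilpotent_inl_inr c1 c2).
apply: rt_trans (gen_nilpotent_path nx nx1 (gen_nilpotent_pair_inl x1 x2)) _.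
exact: gen_nilpotent_path nx1 nc2 (gen_nilpotent_inl_inr x1 c2).
Qed.

End DirectSum.

Theorem proposition5p3 (F : fieldType) (V1 V2 : vectType F)
  (b1 : V1 -> V1 -> V1) (b2 : V2 -> V2 -> V2) :
  is_lie_bracket b1 -> is_lie_bracket b2 ->
  ~ lie_nilpotent b1 fullv -> ~ lie_nilpotent b2 fullv ->
  nilgraph_connected (sum_bracket b1 b2).
Proof.
move=> lieb1 lieb2 nnil1 nnil2 x y nx ny.
have [z1 [c1 /(not_in_nil_inl lieb1 lieb2) nc1]] := not_nilpotent_ad_witness lieb1 nnil1.
have [z2 [c2 /(not_in_nil_inr lieb1 lieb2) nc2]] := not_nilpotent_ad_witness lieb2 nnil2.
apply: rt_trans (path_to_inr lieb1 lieb2 nc1 nc2 nx) _.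
exact: clos_rt_sym (@nil_adjC _ _ _) _ _ (path_to_inr lieb1 lieb2 nc1 nc2 ny).
Qed.
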